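(* Let $P=\{x\in\mathbb{R}^n: Ax\le b,\ 0\le x_i\le u_i \text{ for } i\in I\}$ be a rational polyhedron with $I=\{1,\dots,l\}$ and positive integers $u_i$, and let $\mathcal{B}=(B^1,\dots,B^l)$ be a binarization scheme, $B^i\in\Gamma^{q_i}_{u_i}$, with $z_1\in\mathbb{R}^{q_1}$ the new variables associated with $x_1$. Then for any split set $S=\{(x,z)\in\mathbb{R}^{n+q}:\pi_0<\pi^Tz_1<\pi_0+1\}$ with $\pi\in\mathbb{Z}^{q_1}$ and $\pi_0\in\mathbb{Z}$, there exists a split set $S'=\{x\in\mathbb{R}^n:\sigma_0<\sigma^Tx<\sigma_0+1\}$ with $\sigma\in\mathbb{Z}^n$, $\sigma_j=0$ for $j\notin I$, and $\sigma_0\in\mathbb{Z}$, such that \[\operatorname{proj}_x(P_{\mathcal{B}}\setminus S)\supseteq P\setminus S'.\]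
   Context: For positive integers $q,u$, $\Gamma^q_u$ is the set of rational polytopes $B\subseteq\{(x,z)\in\mathbb{R}\times[0,1]^q:0\le x\le u\}$ with $\operatorname{proj}_x(B\cap(\mathbb{R}\times\{0,1\}^q))=\{0,1,\dots,u\}$. For a binarization scheme $\mathcal{B}=(B^1,\dots,B^l)$, $q=\sum_iq_i$ and $P_{\mathcal{B}}=\{(x,z)\in\mathbb{R}^n\times\mathbb{R}^q: x\in P,\ (x_i,z_i)\in B^i \text{ for } i\in I\}$, where $z=(z_1,\dots,z_l)$ with $z_i\in\mathbb{R}^{q_i}$. $\operatorname{proj}_x$ is orthogonal projection onto the $x$-coordinates. *)

From HB Require Import structures.
From mathcomp Require Import all_boot all_order all_algebra.
From mathcomp Require Import reals.
Set Implicit Arguments. Unset Strict Implicit. Unset Printing Implicit Defensive.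
Import Order.TTheory GRing.Theory Num.Theory.
Local Open Scope ring_scope.

Definition rat_polytope (R : realType) (q : nat) (B : R * 'cV[R]_q -> Prop) : Prop :=
  (exists (k : nat) (a : 'I_k -> rat) (C : 'I_k -> 'I_q -> rat) (d : 'I_k -> rat),
     forall p : R * 'cV[R]_q,
       B p <-> (forall j, ratr (a j) * p.1 + \sum_t ratr (C j t) * p.2 t 0 <= ratr (d j)))
  /\ (exists M : R, forall p, B p -> `|p.1| <= M /\ forall t, `|p.2 t 0| <= M).

Definition Gamma (R : realType) (q u : nat) (B : R * 'cV[R]_q -> Prop) : Prop :=
  [/\ rat_polytope B,
      (forall p, B p -> (0 <= p.1 <= u%:R) /\ forall t, 0 <= p.2 t 0 <= 1) &
      (forall x : R,
         (exists z : 'cV[R]_q, (forall t, z t 0 = 0 \/ z t 0 = 1) /\ B (x, z))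
         <-> (exists k : nat, (k <= u)%N /\ x = k%:R))].

Definition inP_poly (R : realType) (m n l : nat) (A : 'M[rat]_(m, n)) (b : 'cV[rat]_m)
  (hln : (l <= n)%N) (u : 'I_l -> nat) (x : 'cV[R]_n) : Prop :=
  (forall j, (map_mx ratr A *m x) j 0 <= ratr (b j 0)) /\
  (forall i : 'I_l, 0 <= x (widen_ord hln i) 0 <= (u i)%:R).

Definition inPB (R : realType) (m n l : nat) (A : 'M[rat]_(m, n)) (b : 'cV[rat]_m)
  (hln : (l <= n)%N) (u : 'I_l -> nat) (q : 'I_l -> nat)
  (Bs : forall i : 'I_l, R * 'cV[R]_(q i) -> Prop)
  (x : 'cV[R]_n) (z : forall i : 'I_l, 'cV[R]_(q i)) : Prop :=
  inP_poly A b hln u x /\ forall i : 'I_l, Bs i (x (widen_ord hln i) 0, z i).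

Definition idot (R : realType) (k : nat) (s : 'I_k -> int) (x : 'cV[R]_k) : R :=
  \sum_j (s j)%:~R * x j 0.

(* The split on z_1 is pulled back to a split on x_1 alone.  Each integer
   k in [0, u_1] has a binary point (k, z) of B^1, and pi^T z is then an
   integer, so it lies on the left (<= pi_0) or on the right (>= pi_0 + 1)
   of the split.  Walking from k = 0 upwards, let k be the last integer
   before the side first changes (or k = 0 if it never does).  Convexity of
   B^1 covers every x_1 in [0, k] by points on the first side and every x_1
   in [k + 1, u_1] by points on the other side, so the split k < x_1 < k + 1
   does the job; the remaining z_i are arbitrary points of the fibres of
   B^i over x_i. *)
From HB Require Import structures.
From mathcomp Require Import all_boot all_order all_algebra.
From mathcomp Require Import reals.
From mathcomp Require Import ring lra zify.
From Stdlib Require Import Classical ClassicalEpsilon.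
Set Implicit Arguments. Unset Strict Implicit. Unset Printing Implicit Defensive.
Import Order.TTheory GRing.Theory Num.Theory.
Local Open Scope ring_scope.

Section Convexity.
Variable R : realType.

Lemma idotD k (s : 'I_k -> int) (x y : 'cV[R]_k) :
  idot s (x + y) = idot s x + idot s y.
Proof. by rewrite /idot -big_split; apply: eq_bigr => j _; rewrite mxE mulrDr. Qed.

Lemma idotZ k (s : 'I_k -> int) (a : R) (x : 'cV[R]_k) :
  idot s (a *: x) = a * idot s x.
Proof.
by rewrite /idot mulr_sumr; apply: eq_bigr => j _; rewrite mxE mulrCA.
Qed.

Lemma idot_delta k (j0 : 'I_k) (x : 'cV[R]_k) :
  idot (fun j => (j == j0)%:Z) x = x j0 0.
Proof.
rewrite /idot (bigD1 j0) //= eqxx mul1r big1 ?addr0 // => j /negPf ->.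
by rewrite mul0r.
Qed.

Lemma rat_polytope_convex q (B : R * 'cV[R]_q -> Prop) x1 x2 z1 z2 (t : R) :
  rat_polytope B -> 0 <= t <= 1 -> B (x1, z1) -> B (x2, z2) ->
  B ((1 - t) * x1 + t * x2, (1 - t) *: z1 + t *: z2).
Proof.
move=> [[k [a [C [d HB]]]] _] /andP[t_ge0 t_le1] /HB B1 /HB B2.
apply/HB => j /=.
pose f (z : 'cV[R]_q) := \sum_i ratr (C j i) * z i 0.
have h1 : ratr (a j) * x1 + f z1 <= ratr (d j) := B1 j.
have h2 : ratr (a j) * x2 + f z2 <= ratr (d j) := B2 j.
have f_comb : f ((1 - t) *: z1 + t *: z2) = (1 - t) * f z1 + t * f z2.
  rewrite /f !mulr_sumr -big_split /=; apply: eq_bigr => i _; rewrite !mxE; ring.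
by rewrite -/(f _) f_comb; nra.
Qed.

Lemma interval_convex_comb (a c x : R) :
  a <= x <= c -> exists2 t, 0 <= t <= 1 & x = (1 - t) * a + t * c.
Proof.
move=> /andP[ax xc]; have [ac|ac] := eqVneq a c.
  by exists 0; [rewrite lexx ler01 | subst c; lra].
have c_a_gt0 : 0 < c - a by rewrite subr_gt0 lt_neqAle ac (le_trans ax xc).
exists ((x - a) / (c - a)); last by field; rewrite gt_eqF.
apply/andP; split; first by apply: divr_ge0; [rewrite subr_ge0 | exact: ltW].
by rewrite ler_pdivrMr // mul1r lerD2r.
Qed.

Lemma Gamma_fibre q u (B : R * 'cV[R]_q -> Prop) (x : R) :
  Gamma u B -> 0 <= x <= u%:R -> exists z, B (x, z).
Proof.
move=> [HB _ Hbin] /interval_convex_comb [t t01 ->].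
have vertex k : (k <= u)%N -> exists z, B (k%:R, z).
  by move=> ku; have [z [_ Bz]] := proj2 (Hbin k%:R) (ex_intro _ k (conj ku erefl)); exists z.
have [[z0 B0] [zu Bu]] := (vertex 0%N (leq0n u), vertex u (leqnn u)).
by eexists; apply: rat_polytope_convex B0 Bu.
Qed.

End Convexity.

Section SplitSides.
Variables (R : realType) (pi0 : int).

Definition split_side (s : bool) (v : R) : Prop :=
  if s then v <= pi0%:~R else pi0%:~R + 1 <= v.

Lemma split_side_outside s v : split_side s v -> ~ (pi0%:~R < v < pi0%:~R + 1).
Proof. by rewrite /split_side; case: s => h /andP[h1 h2]; lra. Qed.

Lemma split_side_convex s (v1 v2 t : R) : 0 <= t <= 1 ->
  split_side s v1 -> split_side s v2 -> split_side s ((1 - t) * v1 + t * v2).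
Proof.
by rewrite /split_side => /andP[t_ge0 t_le1]; case: s; nra.
Qed.

Lemma split_side_int (w : int) : split_side true w%:~R \/ split_side false w%:~R.
Proof.
rewrite /split_side; have -> : pi0%:~R + 1 = (pi0 + 1)%:~R :> R by rewrite intrD.
by rewrite !ler_int; lia.
Qed.

Variables (q : nat) (B : R * 'cV[R]_q -> Prop) (pi : 'I_q -> int).

Definition vertex_on_side (s : bool) (k : nat) : Prop :=
  exists z, B (k%:R, z) /\ split_side s (idot pi z).

Lemma idot_binary (z : 'cV[R]_q) :
  (forall t, z t 0 = 0 \/ z t 0 = 1) -> exists w : int, idot pi z = w%:~R.
Proof.
move=> zbin; exists (\sum_j pi j * (z j 0 != 0)).
rewrite /idot rmorph_sum; apply: eq_bigr => j _.
by rewrite rmorphM; case: (zbin j) => ->; rewrite ?eqxx ?oner_eq0 ?mulr0 ?mulr1.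
Qed.

Lemma vertex_on_some_side u k :
  Gamma u B -> (k <= u)%N -> vertex_on_side true k \/ vertex_on_side false k.
Proof.
move=> [_ _ Hbin] ku.
have [z [zbin Bz]] : exists z : 'cV[R]_q, (forall t, z t 0 = 0 \/ z t 0 = 1) /\ B (k%:R, z).
  by apply/Hbin; exists k.
have [w ew] := idot_binary zbin.
by case: (split_side_int w) => h; [left | right]; exists z; rewrite ew.
Qed.

Lemma segment_off_split s a c (x : R) :
  rat_polytope B -> vertex_on_side s a -> vertex_on_side s c -> a%:R <= x <= c%:R ->
  exists z, B (x, z) /\ ~ (pi0%:~R < idot pi z < pi0%:~R + 1).
Proof.
move=> HB [za [Ba sa]] [zc [Bc sc]] /interval_convex_comb [t t01 ->].
exists ((1 - t) *: za + t *: zc); split; first exact: rat_polytope_convex.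
by apply: (@split_side_outside s); rewrite idotD !idotZ; apply: split_side_convex.
Qed.

End SplitSides.

Lemma last_before_failure (P : nat -> Prop) u :
  P 0%N -> ~ P u -> exists k, [/\ (k < u)%N, P k & ~ P k.+1].
Proof.
elim: u => [//|u IH] P0 nPu1.
have [Pu|nPu] := classic (P u); first by exists u.
by have [k [ku Pk nPk1]] := IH P0 nPu; exists k; rewrite ltnS ltnW.
Qed.

Lemma Gamma_split_pullback (R : realType) q u (B : R * 'cV[R]_q -> Prop)
    (pi : 'I_q -> int) (pi0 : int) :
  Gamma u B -> exists k : nat, forall x : R, 0 <= x <= u%:R ->
    ~ (k%:R < x < k%:R + 1) ->
    exists z, B (x, z) /\ ~ (pi0%:~R < idot pi z < pi0%:~R + 1).
Proof.
move=> G; have HB : rat_polytope B by case: G.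
have [s V0] : exists s, vertex_on_side pi0 B pi s 0%N.
  by case: (vertex_on_some_side pi0 pi G (leq0n u)); [exists true | exists false].
have other_side k : (k <= u)%N -> ~ vertex_on_side pi0 B pi s k ->
    vertex_on_side pi0 B pi (~~ s) k.
  by move=> ku nVk; case: (vertex_on_some_side pi0 pi G ku); case: s V0 nVk.
have [Vu|nVu] := classic (vertex_on_side pi0 B pi s u).
  by exists 0%N => x /andP[x_ge0 x_leu] _; apply: segment_off_split HB V0 Vu _; rewrite x_ge0.
have [k [ku Vk nVk1]] := last_before_failure V0 nVu.
exists k => x /andP[x_ge0 x_leu] x_out.
have [x_lek|x_gek1] : x <= k%:R \/ k.+1%:R <= x.
  by rewrite -natr1; case: (lerP x k%:R) => xk; [left | right; lra].
- by apply: segment_off_split HB V0 Vk _; rewrite x_ge0.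
- have Vk1 := other_side _ ku nVk1; have Vu := other_side _ (leqnn u) nVu.
  by apply: segment_off_split HB Vk1 Vu _; rewrite x_gek1.
Qed.

Lemma choice_with_value (I : eqType) (T : I -> Type) (P : forall i, T i -> Prop)
    (i0 : I) (t0 : T i0) :
  P i0 t0 -> (forall i, exists t, P i t) ->
  exists f : forall i, T i, (forall i, P i (f i)) /\ f i0 = t0.
Proof.
move=> P0 HP.
have H i : exists t, P i t /\ forall e : i0 = i, t = eq_rect i0 T t0 i e.
  have [<-|ne] := eqVneq i0 i.
    by exists t0; split => // e; rewrite (eq_irrelevance e erefl).
  by have [t Pt] := HP i; exists t; split => // e; rewrite e eqxx in ne.
exists (fun i => proj1_sig (constructive_indefinite_description _ (H i))).
split=> [i|]; first exact: (proj2_sig (constructive_indefinite_description _ (H i))).1.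
exact: (proj2_sig (constructive_indefinite_description _ (H i0))).2 erefl.
Qed.

Theorem proposition5 (R : realType) (m n l : nat) (A : 'M[rat]_(m, n)) (b : 'cV[rat]_m)
  (hl : (0 < l)%N) (hln : (l <= n)%N) (u : 'I_l -> nat) (q : 'I_l -> nat)
  (Bs : forall i : 'I_l, R * 'cV[R]_(q i) -> Prop) :
  (forall i, (0 < u i)%N) -> (forall i, (0 < q i)%N) ->
  (forall i, @Gamma R (q i) (u i) (Bs i)) ->
  forall (pi : 'I_(q (Ordinal hl)) -> int) (pi0 : int),
  exists (sigma : 'I_n -> int) (sigma0 : int),
    (forall j : 'I_n, (l <= j)%N -> sigma j = 0) /\
    (forall x : 'cV[R]_n,
       @inP_poly R m n l A b hln u x ->
       ~ (sigma0%:~R < @idot R n sigma x < sigma0%:~R + 1) ->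
       exists z : forall i : 'I_l, 'cV[R]_(q i),
         @inPB R m n l A b hln u q Bs x z /\
         ~ (pi0%:~R < @idot R _ pi (z (Ordinal hl)) < pi0%:~R + 1)).
Proof.
move=> _ _ HG pi pi0; set i1 := Ordinal hl; set j1 := widen_ord hln i1.
have [k Hk] := Gamma_split_pullback pi pi0 (HG i1).
exists (fun j => (j == j1)%:Z), k; split=> [j lj|x [Ax xbox]].
  by apply/eqP; rewrite eqz_nat eqb0; apply: contraTN lj => /eqP ->; rewrite -ltnNge.
rewrite idot_delta -pmulrn => x_out.
have [z1 [Bz1 z1_out]] := Hk _ (xbox i1) x_out.
have [z [Bz z_i1]] := choice_with_value (P := fun i zi => Bs i (x (widen_ord hln i) 0, zi)) Bz1
  (fun i => Gamma_fibre (HG i) (xbox i)).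
by exists z; split; [split | rewrite z_i1].
Qed.
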